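(* Let $(p_0,\dots,p_{n-1})$ be a closed discrete curve with $l_k=l_0$ and $\theta_k=\theta_0\in(-\pi,\pi)$ for all $k$, and let $\kappa=2\tan(\theta_0/2)/l_0$ (so the curve is an equilibrium of $L+\kappa\mathrm{Vol}$). Let $p(t)$, $t\in(-\varepsilon,\varepsilon)$, be a $C^2$ family of closed discrete curves with $p(0)=p$, $\mathrm{Vol}(p(t))$ constant, and $p_k'(0)=\psi_kN_k+\eta_kT_k$ for real $\psi_k,\eta_k$. Then \[ \frac{d^2}{dt^2}\Big|_{t=0}L(p(t))=\sum_k\Big[|\nabla\psi_k|^2-\kappa^2\psi_k\psi_{k+1}+\tan^2\frac{\theta_0}{2}\Big(\kappa\,\nabla\psi_k(\eta_{k+1}+\eta_k)+|\nabla\eta_k|^2\Big)\Big]l_0 . \] In particular, if $\eta_k=0$ for all $k$ (normal variation), then \[ \frac{d^2}{dt^2}\Big|_{t=0}L(p(t))=\sum_k\big(|\nabla\psi_k|^2-\kappa^2\psi_k\psi_{k+1}\big)l_0=-\sum_k\psi_k\big(\Delta\psi_k+\kappa^2\psi_{k+1}\big)l_0 . \]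
   Context: A closed discrete curve is an $n$-tuple $(p_0,\dots,p_{n-1})$ of points of $\mathbb{R}^2$ ($n\ge3$), indices modulo $n$, with $l_k:=|p_{k+1}-p_k|\ne0$ for all $k$. $R_\varphi$ denotes rotation of $\mathbb{R}^2$ by $\varphi$. Fix $R\in\{R_{\pi/2},R_{-\pi/2}\}$ and set $\sigma=+1$ if $R=R_{\pi/2}$, $\sigma=-1$ if $R=R_{-\pi/2}$. Edge normal $\nu_k:=R((p_{k+1}-p_k)/l_k)$. The signed angle $\theta_k\in(-\pi,\pi]$ at vertex $p_k$ is defined by $\nu_k=R_{\sigma\theta_k}\nu_{k-1}$. When $\theta_k\ne\pi$, the vertex normal is $N_k:=\dfrac{\nu_k+\nu_{k-1}}{1+\cos\theta_k}$ and the vertex tangent is $T_k:=-RN_k$. Length $L=\sum_k l_k$, area $\mathrm{Vol}=\frac12\sum_k\langle p_k,\nu_k\rangle l_k$. Discrete gradient $\nabla\psi_k:=(\psi_{k+1}-\psi_k)/l_0$ and discrete Laplacian $\Delta\psi_k:=(\nabla\psi_k-\nabla\psi_{k-1})/l_0=(\psi_{k+1}-2\psi_k+\psi_{k-1})/l_0^2$. *)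

From Stdlib Require Import Reals Lra List Arith.
From Coquelicot Require Import Coquelicot.
Open Scope R_scope.

Definition pt := (R * R)%type.
Definition padd (a b : pt) : pt := (fst a + fst b, snd a + snd b).
Definition psub (a b : pt) : pt := (fst a - fst b, snd a - snd b).
Definition pscal (c : R) (a : pt) : pt := (c * fst a, c * snd a).
Definition pdot (a b : pt) : R := fst a * fst b + snd a * snd b.
Definition pnorm (a : pt) : R := sqrt (pdot a a).
Definition rot (phi : R) (a : pt) : pt :=
  (cos phi * fst a - sin phi * snd a, sin phi * fst a + cos phi * snd a).

Definition fsum (n : nat) (f : nat -> R) : R :=
  fold_right Rplus 0 (map f (seq 0 n)).

(* A discrete curve is c : nat -> pt, of which only c 0 .. c (n-1) matter;
   all indices are taken modulo n. *)
Definition next (n k : nat) : nat := (S k) mod n.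
Definition prev (n k : nat) : nat := (k + n - 1) mod n.

Definition edge (n : nat) (c : nat -> pt) (k : nat) : pt :=
  psub (c (next n k)) (c (k mod n)).
Definition len (n : nat) (c : nat -> pt) (k : nat) : R := pnorm (edge n c k).

(* The fixed rotation R = R_{sigma pi/2}, sigma in {1,-1}. *)
Definition Jrot (sigma : R) : pt -> pt := rot (sigma * (PI / 2)).

Definition nu (sigma : R) (n : nat) (c : nat -> pt) (k : nat) : pt :=
  Jrot sigma (pscal (/ len n c k) (edge n c k)).

Definition closed_curve (n : nat) (c : nat -> pt) : Prop :=
  (3 <= n)%nat /\ forall k, (k < n)%nat -> len n c k <> 0.

Definition is_signed_angle (sigma : R) (n : nat) (c : nat -> pt) (k : nat)
  (th : R) : Prop :=
  - PI < th <= PI /\ nu sigma n c k = rot (sigma * th) (nu sigma n c (prev n k)).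

Definition vnormal (sigma : R) (n : nat) (c : nat -> pt) (th : R) (k : nat) : pt :=
  pscal (/ (1 + cos th)) (padd (nu sigma n c k) (nu sigma n c (prev n k))).
Definition vtangent (sigma : R) (n : nat) (c : nat -> pt) (th : R) (k : nat) : pt :=
  pscal (-1) (Jrot sigma (vnormal sigma n c th k)).

Definition Length (n : nat) (c : nat -> pt) : R := fsum n (len n c).
Definition Vol (sigma : R) (n : nat) (c : nat -> pt) : R :=
  / 2 * fsum n (fun k => pdot (c k) (nu sigma n c k) * len n c k).

Definition dgrad (n : nat) (l0 : R) (psi : nat -> R) (k : nat) : R :=
  (psi (next n k) - psi (k mod n)) / l0.
Definition dlap (n : nat) (l0 : R) (psi : nat -> R) (k : nat) : R :=
  (dgrad n l0 psi k - dgrad n l0 psi (prev n k)) / l0.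

Definition C2_on (eps : R) (f : R -> R) : Prop :=
  forall t, - eps < t < eps ->
    ex_derive f t /\ ex_derive_n f 2 t /\ continuous (Derive_n f 2) t.

(* Let t = tan(th0/2), so that kappa = 2 t / l0.  The proof has three parts.
   1. Calculus along a C^2 family P(t) of polygons: the second derivative of
      the length at t = 0 is a sum over edges of len2 (edge, edge velocity,
      edge acceleration), and, since the area is constant, the second
      derivative of the shoelace sum A = sum_k cross p_k p_(k+1) vanishes.
   2. Lagrange multiplier: adding mu times the second variation of A, the
      accelerations of the vertices appear paired with the gradient of
      L + mu A at each vertex (up to a telescoping term), so they drop out
      whenever the curve is critical for L + mu A.
   3. Geometry of the equiangular curve: it is critical for mu = - sigma t / l0
      (i.e. for L + kappa Vol), and in the frame of the k-th edge the vertex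
      velocities psi N + eta T have explicit components, from which each edge
      contributes the stated integrand plus a telescoping term.
   The normal case follows by dropping the eta terms and summing by parts. *)

From Stdlib Require Import Reals List Arith Lra Lia.
From Coquelicot Require Import Coquelicot.
Open Scope R_scope.

Lemma fsum_S n f : fsum (S n) f = fsum n f + f n.
Proof.
unfold fsum; rewrite seq_S, map_app, fold_right_app; simpl.
generalize (f n); induction (map f (seq 0 n)) as [|x l IH]; intros y; simpl; [lra|].
rewrite IH; lra.
Qed.

Lemma fsum_shift n f : fsum (S n) f = f 0%nat + fsum n (fun k => f (S k)).
Proof. unfold fsum; simpl; f_equal; rewrite <- seq_shift, map_map; reflexivity. Qed.

Lemma fsum_ext n f g : (forall k, (k < n)%nat -> f k = g k) -> fsum n f = fsum n g.
Proof.
induction n as [|n IH]; intros H; [reflexivity|].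
rewrite !fsum_S, IH by (intros; apply H; lia); rewrite H by lia; reflexivity.
Qed.

Lemma fsum_plus n f g : fsum n (fun k => f k + g k) = fsum n f + fsum n g.
Proof. induction n; [unfold fsum; simpl; lra|]. rewrite !fsum_S, IHn; lra. Qed.

Lemma fsum_scal n c f : fsum n (fun k => c * f k) = c * fsum n f.
Proof. induction n; [unfold fsum; simpl; lra|]. rewrite !fsum_S, IHn; lra. Qed.

Lemma fsum_opp n f : fsum n (fun k => - f k) = - fsum n f.
Proof. induction n; [unfold fsum; simpl; lra|]. rewrite !fsum_S, IHn; lra. Qed.

Lemma fsum_zero n f : (forall k, (k < n)%nat -> f k = 0) -> fsum n f = 0.
Proof.
induction n as [|n IH]; intros H; [reflexivity|].
rewrite fsum_S, IH by (intros; apply H; lia); rewrite H by lia; ring.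
Qed.

Lemma next_lt n k : (0 < n)%nat -> (next n k < n)%nat.
Proof. intros; unfold next; apply Nat.mod_upper_bound; lia. Qed.

Lemma prev_lt n k : (0 < n)%nat -> (prev n k < n)%nat.
Proof. intros; unfold prev; apply Nat.mod_upper_bound; lia. Qed.

Lemma next_val n k : (k < n)%nat -> next n k = (if Nat.eqb (S k) n then 0 else S k)%nat.
Proof.
intros Hk; unfold next; destruct (Nat.eqb_spec (S k) n) as [<-|Hne].
- apply Nat.Div0.mod_same.
- apply Nat.mod_small; lia.
Qed.

Lemma prev_next n k : (k < n)%nat -> prev n (next n k) = k.
Proof.
intros Hk; rewrite next_val by exact Hk; unfold prev.
destruct (Nat.eqb_spec (S k) n) as [<-|Hne].
- replace (0 + S k - 1)%nat with k by lia; apply Nat.mod_small; lia.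
- replace (S k + n - 1)%nat with (k + 1 * n)%nat by lia.
  rewrite Nat.Div0.mod_add; apply Nat.mod_small; lia.
Qed.

Lemma fsum_next n g : (0 < n)%nat -> fsum n (fun k => g (next n k)) = fsum n g.
Proof.
intros Hn; destruct n as [|m]; [lia|].
rewrite fsum_S, (fsum_shift m g).
rewrite (fsum_ext m (fun k => g (next (S m) k)) (fun k => g (S k))).
- rewrite next_val, Nat.eqb_refl by lia; lra.
- intros k Hk; rewrite next_val by lia.
  destruct (Nat.eqb_spec (S k) (S m)); [lia | reflexivity].
Qed.

Lemma fsum_telescope n g : (0 < n)%nat -> fsum n (fun k => g (next n k) - g k) = 0.
Proof.
intros Hn.
rewrite (fsum_ext n _ (fun k => g (next n k) + - g k)) by (intros; ring).
rewrite fsum_plus, fsum_opp, fsum_next by exact Hn; ring.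
Qed.

(* The cross product [cross a b] (so that the signed area of a polygon is
   half the cyclic sum of [cross p_k p_(k+1)]), and the clockwise quarter turn
   [perp], characterized by [cross a b = pdot a (perp b)]. *)
Definition cross (a b : pt) : R := fst a * snd b - snd a * fst b.
Definition perp (a : pt) : pt := (snd a, - fst a).

Lemma sign_sq (sigma : R) : (sigma = 1 \/ sigma = -1) -> sigma * sigma = 1.
Proof. intros [-> | ->]; ring. Qed.

Lemma Jrot_eq sigma a : (sigma = 1 \/ sigma = -1) ->
  Jrot sigma a = (- sigma * snd a, sigma * fst a).
Proof.
intros Hs; unfold Jrot, rot.
assert (E : cos (sigma * (PI / 2)) = 0 /\ sin (sigma * (PI / 2)) = sigma).
{ destruct Hs as [-> | ->].
  - rewrite Rmult_1_l, cos_PI2, sin_PI2; auto.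
  - replace (-1 * (PI / 2)) with (- (PI / 2)) by ring.
    rewrite cos_neg, sin_neg, cos_PI2, sin_PI2; auto. }
destruct E as [-> ->]; f_equal; ring.
Qed.

Lemma rot_signed sigma th a : (sigma = 1 \/ sigma = -1) ->
  rot (sigma * th) a =
  (cos th * fst a - sigma * sin th * snd a, sigma * sin th * fst a + cos th * snd a).
Proof.
intros [-> | ->]; unfold rot.
- rewrite Rmult_1_l; f_equal; ring.
- replace (-1 * th) with (- th) by ring; rewrite cos_neg, sin_neg; f_equal; ring.
Qed.

Lemma rot_signed_inv sigma th a b : (sigma = 1 \/ sigma = -1) ->
  b = rot (sigma * th) a ->
  a = (cos th * fst b + sigma * sin th * snd b, - sigma * sin th * fst b + cos th * snd b).
Proof.
intros Hs ->; rewrite rot_signed by exact Hs.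
pose proof (sin2_cos2 th) as Hsc; unfold Rsqr in Hsc; pose proof (sign_sq sigma Hs) as Hs2.
destruct a as [x y]; simpl; f_equal;
  [ transitivity ((sigma * sigma * (sin th * sin th) + cos th * cos th) * x)
  | transitivity ((sigma * sigma * (sin th * sin th) + cos th * cos th) * y) ];
  solve [rewrite Hs2, Rmult_1_l, Hsc; ring | ring].
Qed.

Lemma tan_half th : - PI < th < PI ->
  0 < 1 + cos th /\ tan (th / 2) = sin th / (1 + cos th).
Proof.
intros Hth.
assert (HC : 0 < cos (th / 2)) by (apply cos_gt_0; lra).
assert (E : th = 2 * (th / 2)) by field.
assert (Ec : cos th = 2 * cos (th / 2) * cos (th / 2) - 1)
  by (rewrite E at 1; rewrite cos_2a_cos; ring).
assert (Es : sin th = 2 * sin (th / 2) * cos (th / 2))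
  by (rewrite E at 1; rewrite sin_2a; ring).
rewrite Ec, Es; unfold tan; split; [nra | field; repeat split; nra].
Qed.

Definition pderive (u : R -> pt) (t : R) (v : pt) : Prop :=
  is_derive (fun s => fst (u s)) t (fst v) /\ is_derive (fun s => snd (u s)) t (snd v).

Lemma is_derive_fsum (f : nat -> R -> R) (df : nat -> R) n t :
  (forall k, (k < n)%nat -> is_derive (f k) t (df k)) ->
  is_derive (fun s => fsum n (fun k => f k s)) t (fsum n df).
Proof.
induction n as [|n IH]; intros H.
- apply (is_derive_const (K := R_AbsRing) (V := R_NormedModule) 0 t).
- apply (is_derive_ext (fun s => fsum n (fun k => f k s) + f n s));
    [intros s; rewrite fsum_S; reflexivity|].
  rewrite fsum_S; apply (is_derive_plus (K := R_AbsRing) (V := R_NormedModule)).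
  + apply IH; intros; apply H; lia.
  + apply H; lia.
Qed.

Lemma is_derive_Rmult (f g : R -> R) t df dg :
  is_derive f t df -> is_derive g t dg ->
  is_derive (fun s => f s * g s) t (df * g t + f t * dg).
Proof. intros; apply (is_derive_mult (K := R_AbsRing)); auto; intros; apply Rmult_comm. Qed.

Lemma pderive_psub u w t u' w' :
  pderive u t u' -> pderive w t w' -> pderive (fun s => psub (u s) (w s)) t (psub u' w').
Proof.
intros [Hu1 Hu2] [Hw1 Hw2]; split;
  apply (is_derive_minus (K := R_AbsRing) (V := R_NormedModule)); auto.
Qed.

Lemma pdot_derive u w t u' w' :
  pderive u t u' -> pderive w t w' ->
  is_derive (fun s => pdot (u s) (w s)) t (pdot u' (w t) + pdot (u t) w').
Proof.
intros [Hu1 Hu2] [Hw1 Hw2]; unfold pdot.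
replace (fst u' * fst (w t) + snd u' * snd (w t) + (fst (u t) * fst w' + snd (u t) * snd w'))
  with ((fst u' * fst (w t) + fst (u t) * fst w') + (snd u' * snd (w t) + snd (u t) * snd w'))
  by ring.
apply (is_derive_plus (K := R_AbsRing) (V := R_NormedModule)); apply is_derive_Rmult; auto.
Qed.

Lemma cross_derive u w t u' w' :
  pderive u t u' -> pderive w t w' ->
  is_derive (fun s => cross (u s) (w s)) t (cross u' (w t) + cross (u t) w').
Proof.
intros [Hu1 Hu2] [Hw1 Hw2]; unfold cross.
replace (fst u' * snd (w t) - snd u' * fst (w t) + (fst (u t) * snd w' - snd (u t) * fst w'))
  with ((fst u' * snd (w t) + fst (u t) * snd w') - (snd u' * fst (w t) + snd (u t) * fst w'))
  by ring.
apply (is_derive_minus (K := R_AbsRing) (V := R_NormedModule)); apply is_derive_Rmult; auto.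
Qed.

Lemma pnorm_derive u t u' :
  pderive u t u' -> 0 < pnorm (u t) ->
  is_derive (fun s => pnorm (u s)) t (pdot (u t) u' / pnorm (u t)).
Proof.
intros Hu Hpos; unfold pnorm in *.
assert (Hq : 0 < pdot (u t) (u t)) by (apply sqrt_lt_0_alt; rewrite sqrt_0; exact Hpos).
replace (pdot (u t) u' / sqrt (pdot (u t) (u t)))
  with ((pdot u' (u t) + pdot (u t) u') / (2 * sqrt (pdot (u t) (u t))))
  by (replace (pdot u' (u t)) with (pdot (u t) u') by (unfold pdot; ring); field; lra).
apply (is_derive_sqrt (fun s => pdot (u s) (u s))); [apply pdot_derive|]; auto.
Qed.

Lemma projection_derive u w t u' w' :
  pderive u t u' -> pderive w t w' -> 0 < pnorm (u t) ->
  is_derive (fun s => pdot (u s) (w s) / pnorm (u s)) t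
    ((pdot u' (w t) + pdot (u t) w') / pnorm (u t)
     - pdot (u t) (w t) * pdot (u t) u' / pnorm (u t) ^ 3).
Proof.
intros Hu Hw Hpos.
replace ((pdot u' (w t) + pdot (u t) w') / pnorm (u t)
         - pdot (u t) (w t) * pdot (u t) u' / pnorm (u t) ^ 3)
  with (((pdot u' (w t) + pdot (u t) w') * pnorm (u t)
         - pdot (u t) (w t) * (pdot (u t) u' / pnorm (u t))) / pnorm (u t) ^ 2)
  by (field; lra).
apply is_derive_div; [apply pdot_derive | apply pnorm_derive |]; auto; lra.
Qed.

Lemma interval_nbhd eps : 0 < eps -> locally 0 (fun t => - eps < t < eps).
Proof.
intros Heps; exists (mkposreal eps Heps); intros s Hs.
change (Rabs (s - 0) < eps) in Hs; rewrite Rminus_0_r in Hs; apply Rabs_def2 in Hs; lra.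
Qed.

Lemma second_derivative_at0 (f f1 : R -> R) eps c :
  0 < eps -> (forall t, - eps < t < eps -> is_derive f t (f1 t)) -> is_derive f1 0 c ->
  Derive_n f 2 0 = c.
Proof.
intros Heps Hf Hf1; simpl.
rewrite (Derive_ext_loc _ f1); [apply is_derive_unique; exact Hf1|].
eapply filter_imp; [|apply (interval_nbhd eps Heps)].
intros s Hs; apply is_derive_unique, Hf; exact Hs.
Qed.

Lemma edge_lt n c k : (k < n)%nat -> edge n c k = psub (c (next n k)) (c k).
Proof. intros Hk; unfold edge; rewrite Nat.mod_small by exact Hk; reflexivity. Qed.

Lemma edge_ext n c d k : (0 < n)%nat -> (forall j, (j < n)%nat -> c j = d j) ->
  edge n c k = edge n d k.
Proof.
intros Hn H; unfold edge; rewrite !H; [reflexivity | |];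
  [apply Nat.mod_upper_bound | apply next_lt]; lia.
Qed.

Lemma edge_pderive n (c : R -> nat -> pt) (d : nat -> pt) t k : (0 < n)%nat ->
  (forall j, (j < n)%nat -> pderive (fun s => c s j) t (d j)) ->
  pderive (fun s => edge n (c s) k) t (edge n d k).
Proof.
intros Hn H; unfold edge; apply pderive_psub; apply H;
  [apply next_lt | apply Nat.mod_upper_bound]; lia.
Qed.

Lemma len_pos n c k : closed_curve n c -> (k < n)%nat -> 0 < len n c k.
Proof.
intros [_ Hl] Hk; specialize (Hl k Hk); unfold len, pnorm in *.
pose proof (sqrt_pos (pdot (edge n c k) (edge n c k))); lra.
Qed.

Lemma Vol_shoelace sigma n c : (sigma = 1 \/ sigma = -1) ->
  (forall k, (k < n)%nat -> len n c k <> 0) ->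
  Vol sigma n c = - sigma / 2 * fsum n (fun k => cross (c k) (c (next n k))).
Proof.
intros Hs Hl; unfold Vol.
rewrite (fsum_ext n _ (fun k => - sigma * cross (c k) (c (next n k)))).
- rewrite fsum_scal; field.
- intros k Hk; unfold nu; rewrite Jrot_eq, edge_lt by assumption.
  unfold pdot, pscal, psub, cross; simpl; field; apply Hl; exact Hk.
Qed.

Definition vel (P : R -> nat -> pt) (t : R) (k : nat) : pt :=
  (Derive (fun s => fst (P s k)) t, Derive (fun s => snd (P s k)) t).
Definition acc (P : R -> nat -> pt) (t : R) (k : nat) : pt :=
  (Derive (fun s => fst (vel P s k)) t, Derive (fun s => snd (vel P s k)) t).

Lemma C2_kinematics eps (P : R -> nat -> pt) k t :
  C2_on eps (fun s => fst (P s k)) /\ C2_on eps (fun s => snd (P s k)) ->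
  - eps < t < eps ->
  pderive (fun s => P s k) t (vel P t k) /\ pderive (fun s => vel P s k) t (acc P t k).
Proof.
intros [Hx Hy] Ht; destruct (Hx t Ht) as [Hx1 [Hx2 _]]; destruct (Hy t Ht) as [Hy1 [Hy2 _]].
repeat split; apply Derive_correct; assumption.
Qed.

(* Second variation of the length of one edge e, with velocity e1 and
   acceleration e2. *)
Definition len2 (e e1 e2 : pt) : R :=
  (pdot e1 e1 + pdot e e2) / pnorm e - pdot e e1 * pdot e e1 / pnorm e ^ 3.

(* Second variation of the k-th shoelace term of a curve c with vertex
   velocities v and accelerations a. *)
Definition area2 (n : nat) (c v a : nat -> pt) (k : nat) : R :=
  cross (a k) (c (next n k)) + 2 * cross (v k) (v (next n k)) + cross (c k) (a (next n k)).

(** * Critical curves: the accelerations drop out of the second variation *)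

(* The gradient of [Length + mu * (shoelace sum)] with respect to the vertex
   p_j, namely t_(j-1) - t_j + mu perp(e_(j-1) + e_j), where e_k are the edges
   and t_k = e_k / l_k the unit tangents. *)
Definition vertex_gradient (n : nat) (c : nat -> pt) (mu : R) (j : nat) : pt :=
  padd (psub (pscal (/ len n c (prev n j)) (edge n c (prev n j))) (pscal (/ len n c j) (edge n c j)))
       (pscal mu (perp (padd (edge n c (prev n j)) (edge n c j)))).

Lemma vertex_gradient_ext n c d mu j : (0 < n)%nat ->
  (forall k, (k < n)%nat -> c k = d k) -> vertex_gradient n c mu j = vertex_gradient n d mu j.
Proof. intros Hn H; unfold vertex_gradient, len; rewrite !(edge_ext n c d) by assumption; reflexivity. Qed.

(* At a critical point of [Length + mu * (shoelace sum)], the second variation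
   of [Length + mu * (shoelace sum)] only involves the vertex velocities: the
   acceleration a_j of each vertex is paired with the vanishing gradient at p_j,
   up to a telescoping term. *)
Lemma accelerations_cancel n (c v a : nat -> pt) mu : (0 < n)%nat ->
  (forall k, (k < n)%nat -> len n c k <> 0) ->
  (forall j, (j < n)%nat -> vertex_gradient n c mu j = (0, 0)) ->
  fsum n (fun k => len2 (edge n c k) (edge n v k) (edge n a k)) + mu * fsum n (area2 n c v a)
  = fsum n (fun k => len2 (edge n c k) (edge n v k) (0, 0) + 2 * mu * cross (v k) (v (next n k))).
Proof.
intros Hn Hl Hcrit.
set (W := fun j => pdot (a j) (padd (pscal (/ len n c (prev n j)) (edge n c (prev n j)))
                                    (pscal mu (perp (edge n c (prev n j)))))).
set (B := fun j => pdot (a j) (padd (pscal (- / len n c j) (edge n c j))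
                                    (pscal mu (perp (edge n c j))))).
set (h := fun j => cross (c j) (a j)).
assert (HWB : forall j, (j < n)%nat -> W j + B j = 0).
{ intros j Hj; transitivity (pdot (a j) (vertex_gradient n c mu j)).
  - unfold W, B, vertex_gradient, pdot, padd, psub, pscal, perp; simpl; ring.
  - rewrite (Hcrit j Hj); unfold pdot; simpl; ring. }
rewrite <- fsum_scal, <- fsum_plus.
transitivity (fsum n (fun k => len2 (edge n c k) (edge n v k) (0, 0) + 2 * mu * cross (v k) (v (next n k)))
  + (fsum n (fun k => W (next n k)) + fsum n B) + mu * fsum n (fun k => h (next n k) - h k)).
2: { rewrite fsum_telescope, fsum_next, <- fsum_plus, (fsum_zero n (fun k => W k + B k));
     [ring | exact HWB | exact Hn | exact Hn]. }
rewrite <- fsum_plus, <- fsum_scal, <- !fsum_plus; apply fsum_ext.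
intros k Hk; unfold W, B, h, len2, area2; rewrite prev_next by exact Hk.
pose proof (Hl k Hk) as Hlk; unfold len in Hlk |- *.
rewrite !(edge_lt n _ k Hk) in *.
unfold pdot, cross, perp, psub, pscal, padd; simpl; field; exact Hlk.
Qed.

Section Family.

Variables (n : nat) (P : R -> nat -> pt) (eps : R).
Hypothesis Hn : (0 < n)%nat.
Hypothesis Heps : 0 < eps.
Hypothesis Hclosed : forall t, - eps < t < eps -> closed_curve n (P t).
Hypothesis HC2 : forall k, (k < n)%nat ->
  C2_on eps (fun t => fst (P t k)) /\ C2_on eps (fun t => snd (P t k)).

Let Hpos : - eps < 0 < eps.
Proof. lra. Qed.

Lemma length_second_variation :
  Derive_n (fun t => Length n (P t)) 2 0 =
  fsum n (fun k => len2 (edge n (P 0) k) (edge n (vel P 0) k) (edge n (acc P 0) k)).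
Proof.
apply (second_derivative_at0 _
  (fun t => fsum n (fun k => pdot (edge n (P t) k) (edge n (vel P t) k) / pnorm (edge n (P t) k)))
  eps _ Heps).
- intros t Ht; apply (is_derive_fsum (fun k s => pnorm (edge n (P s) k))); intros k Hk.
  apply pnorm_derive; [|apply (len_pos n (P t) k (Hclosed t Ht) Hk)].
  apply edge_pderive; [exact Hn|]; intros j Hj; apply (C2_kinematics eps P j t (HC2 j Hj) Ht).
- apply (is_derive_fsum (fun k s => pdot (edge n (P s) k) (edge n (vel P s) k)
                                    / pnorm (edge n (P s) k))); intros k Hk.
  apply projection_derive; [| | apply (len_pos n (P 0) k (Hclosed 0 Hpos) Hk)];
    apply edge_pderive; try exact Hn; intros j Hj; apply (C2_kinematics eps P j 0 (HC2 j Hj) Hpos).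
Qed.

Lemma area_second_variation (sigma : R) :
  (sigma = 1 \/ sigma = -1) ->
  (forall t, - eps < t < eps -> Vol sigma n (P t) = Vol sigma n (P 0)) ->
  fsum n (area2 n (P 0) (vel P 0) (acc P 0)) = 0.
Proof.
intros Hs HVol.
set (A := fun t => fsum n (fun k => cross (P t k) (P t (next n k)))).
assert (HA : forall t, - eps < t < eps -> A t = A 0).
{ intros t Ht; pose proof (HVol t Ht) as HV.
  rewrite !Vol_shoelace in HV by (exact Hs || apply (Hclosed _ Ht) || apply (Hclosed _ Hpos)).
  unfold A; destruct Hs as [-> | ->]; lra. }
rewrite <- (second_derivative_at0 A
  (fun t => fsum n (fun k => cross (vel P t k) (P t (next n k)) + cross (P t k) (vel P t (next n k))))
  eps _ Heps).
- rewrite (Derive_n_ext_loc _ (fun _ => A 0)); [apply Derive_n_const|].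
  eapply filter_imp; [|apply (interval_nbhd eps Heps)]; exact HA.
- intros t Ht; apply (is_derive_fsum (fun k s => cross (P s k) (P s (next n k)))); intros k Hk.
  apply cross_derive; [apply (C2_kinematics eps P k t (HC2 k Hk) Ht)
                     | apply (C2_kinematics eps P _ t (HC2 _ (next_lt n k Hn)) Ht)].
- apply (is_derive_fsum (fun k s => cross (vel P s k) (P s (next n k))
                                    + cross (P s k) (vel P s (next n k)))); intros k Hk.
  destruct (C2_kinematics eps P k 0 (HC2 k Hk) Hpos) as [Hv Ha].
  destruct (C2_kinematics eps P _ 0 (HC2 _ (next_lt n k Hn)) Hpos) as [Hv' Ha'].
  replace (area2 n (P 0) (vel P 0) (acc P 0) k)
    with ((cross (acc P 0 k) (P 0 (next n k)) + cross (vel P 0 k) (vel P 0 (next n k)))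
          + (cross (vel P 0 k) (vel P 0 (next n k)) + cross (P 0 k) (acc P 0 (next n k))))
    by (unfold area2; ring).
  apply (is_derive_plus (K := R_AbsRing) (V := R_NormedModule)); apply cross_derive; assumption.
Qed.

Lemma second_variation_at_critical (sigma mu : R) :
  (sigma = 1 \/ sigma = -1) ->
  (forall t, - eps < t < eps -> Vol sigma n (P t) = Vol sigma n (P 0)) ->
  (forall j, (j < n)%nat -> vertex_gradient n (P 0) mu j = (0, 0)) ->
  Derive_n (fun t => Length n (P t)) 2 0 =
  fsum n (fun k => len2 (edge n (P 0) k) (edge n (vel P 0) k) (0, 0)
                   + 2 * mu * cross (vel P 0 k) (vel P 0 (next n k))).
Proof.
intros Hs HVol Hcrit.
rewrite length_second_variation, <- (accelerations_cancel n (P 0) (vel P 0) (acc P 0) mu);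
  [| exact Hn | | exact Hcrit].
- rewrite (area_second_variation sigma Hs HVol); ring.
- intros k Hk; apply Rgt_not_eq, len_pos; [apply Hclosed, Hpos | exact Hk].
Qed.

End Family.

(** * Second variation of one edge in its own frame *)

Lemma pnorm_scaled_unit l0 a : 0 < l0 -> pdot a a = 1 -> pnorm (pscal l0 a) = l0.
Proof.
intros Hl Ha; unfold pnorm.
replace (pdot (pscal l0 a) (pscal l0 a)) with (l0 * l0 * pdot a a)
  by (unfold pdot, pscal; simpl; ring).
rewrite Ha, Rmult_1_r; apply sqrt_square; lra.
Qed.

Lemma edge_frame_second_variation sigma l0 tau P Q P1 Q1 mu :
  (sigma = 1 \/ sigma = -1) -> 0 < l0 -> pdot tau tau = 1 ->
  let nu := Jrot sigma tau in
  let V := padd (pscal P tau) (pscal Q nu) in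
  let V1 := padd (pscal P1 tau) (pscal Q1 nu) in
  len2 (pscal l0 tau) (psub V1 V) (0, 0) + 2 * mu * cross V V1
  = (Q1 - Q) ^ 2 / l0 + 2 * mu * sigma * (P * Q1 - Q * P1).
Proof.
intros Hs Hl Htau nu V V1.
unfold len2; rewrite pnorm_scaled_unit by assumption.
unfold V, V1, nu; rewrite Jrot_eq by exact Hs.
revert Htau; destruct tau as [a b]; unfold pdot, cross, padd, psub, pscal; simpl; intros Htau.
replace ((P1 * a + Q1 * (- sigma * b) - (P * a + Q * (- sigma * b))) *
         (P1 * a + Q1 * (- sigma * b) - (P * a + Q * (- sigma * b))) +
         (P1 * b + Q1 * (sigma * a) - (P * b + Q * (sigma * a))) *
         (P1 * b + Q1 * (sigma * a) - (P * b + Q * (sigma * a))))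
  with ((P1 - P) ^ 2 + (Q1 - Q) ^ 2)
  by (transitivity ((P1 - P) ^ 2 * (a * a + b * b) + (Q1 - Q) ^ 2 * (sigma * sigma) * (a * a + b * b));
      [rewrite Htau, sign_sq by exact Hs |]; ring).
replace (l0 * a * (P1 * a + Q1 * (- sigma * b) - (P * a + Q * (- sigma * b))) +
         l0 * b * (P1 * b + Q1 * (sigma * a) - (P * b + Q * (sigma * a))))
  with (l0 * (P1 - P))
  by (transitivity (l0 * (P1 - P) * (a * a + b * b)); [rewrite Htau |]; ring).
replace ((P * a + Q * (- sigma * b)) * (P1 * b + Q1 * (sigma * a)) -
         (P * b + Q * (sigma * a)) * (P1 * a + Q1 * (- sigma * b)))
  with (sigma * (P * Q1 - Q * P1))
  by (transitivity (sigma * (P * Q1 - Q * P1) * (a * a + b * b)); [rewrite Htau |]; ring).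
field; lra.
Qed.

(* The per-edge integrand of the second variation, up to a telescoping term,
   for the tangential and normal velocities of vertex_velocities and the
   multiplier mu = - sigma t / l0, with kappa = 2 t / l0. *)
Lemma second_variation_integrand sigma t l0 ps et ps1 et1 :
  (sigma = 1 \/ sigma = -1) -> l0 <> 0 ->
  let kappa := 2 * t / l0 in
  (ps1 + t * et1 - (ps - t * et)) ^ 2 / l0
  + 2 * (- sigma * t / l0) * sigma * ((t * ps + et) * (ps1 + t * et1) - (ps - t * et) * (- t * ps1 + et1))
  = (((ps1 - ps) / l0) ^ 2 - kappa ^ 2 * ps * ps1
     + t ^ 2 * (kappa * ((ps1 - ps) / l0) * (et1 + et) + ((et1 - et) / l0) ^ 2)) * l0
    + 2 * t * (1 - t ^ 2) / l0 * (ps1 * et1 - ps * et).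
Proof. intros Hs Hl kappa; unfold kappa; destruct Hs as [-> | ->]; field; exact Hl. Qed.

(** * The equiangular, equilateral curve *)

Section Equiangular.

Variables (sigma : R) (n : nat) (p : nat -> pt) (l0 th0 : R).
Hypothesis Hsigma : sigma = 1 \/ sigma = -1.
Hypothesis Hn : (0 < n)%nat.
Hypothesis Hlen : forall k, (k < n)%nat -> len n p k = l0.
Hypothesis Hl0 : 0 < l0.
Hypothesis Hth : - PI < th0 < PI.
Hypothesis Hangle : forall k, (k < n)%nat -> is_signed_angle sigma n p k th0.

Definition tangent (k : nat) : pt := pscal (/ l0) (edge n p k).
Definition normal (k : nat) : pt := Jrot sigma (tangent k).

Lemma nu_normal k : (k < n)%nat -> nu sigma n p k = normal k.
Proof. intros Hk; unfold nu, normal, tangent; rewrite Hlen by exact Hk; reflexivity. Qed.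

Lemma edge_tangent k : edge n p k = pscal l0 (tangent k).
Proof.
unfold tangent, pscal; destruct (edge n p k) as [x y]; simpl; f_equal; field; lra.
Qed.

Lemma tangent_unit k : (k < n)%nat -> pdot (tangent k) (tangent k) = 1.
Proof.
intros Hk; pose proof (Hlen k Hk) as Hl; unfold len, pnorm in Hl.
assert (Hsq : pdot (edge n p k) (edge n p k) = l0 * l0).
{ rewrite <- Hl, sqrt_sqrt; [reflexivity|].
  unfold pdot; apply Rplus_le_le_0_compat; apply Rle_0_sqr. }
transitivity (/ l0 * / l0 * pdot (edge n p k) (edge n p k));
  [unfold tangent, pdot, pscal; simpl; ring | rewrite Hsq; field; lra].
Qed.

Lemma previous_tangent k : (k < n)%nat ->
  tangent (prev n k) =
  padd (pscal (cos th0) (tangent k)) (pscal (- sin th0) (normal k)).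
Proof.
intros Hk; destruct (Hangle k Hk) as [_ Hrot].
rewrite !nu_normal in Hrot by (exact Hk || apply prev_lt, Hn).
apply rot_signed_inv in Hrot; [|exact Hsigma].
unfold normal in *; rewrite !Jrot_eq in * by exact Hsigma.
destruct (tangent (prev n k)) as [x y]; destruct (tangent k) as [a b].
unfold padd, pscal; simpl in *; injection Hrot as Hx Hy.
destruct Hsigma as [-> | ->]; f_equal; lra.
Qed.

Lemma vertex_normal k : (k < n)%nat ->
  vnormal sigma n p th0 k = padd (normal k) (pscal (tan (th0 / 2)) (tangent k)).
Proof.
intros Hk; destruct (tan_half th0 Hth) as [Hc ->].
unfold vnormal; rewrite !nu_normal by (exact Hk || apply prev_lt, Hn).
unfold normal at 2; rewrite previous_tangent by exact Hk.
unfold normal; rewrite !Jrot_eq by exact Hsigma.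
destruct (tangent k) as [a b]; unfold padd, pscal; simpl.
destruct Hsigma as [-> | ->]; f_equal; field; lra.
Qed.

Lemma next_vertex_normal k : (k < n)%nat ->
  vnormal sigma n p th0 (next n k) = psub (normal k) (pscal (tan (th0 / 2)) (tangent k)).
Proof.
intros Hk; destruct (tan_half th0 Hth) as [Hc ->].
assert (Hnk : (next n k < n)%nat) by (apply next_lt, Hn).
destruct (Hangle _ Hnk) as [_ Hrot]; rewrite prev_next in Hrot by exact Hk.
unfold vnormal; rewrite prev_next, Hrot, rot_signed, !nu_normal by assumption.
unfold normal; rewrite !Jrot_eq by exact Hsigma.
destruct (tangent k) as [a b]; unfold padd, psub, pscal; simpl.
destruct Hsigma as [-> | ->]; f_equal; field; lra.
Qed.

Lemma vertex_velocities (psi eta : nat -> R) k : (k < n)%nat ->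
  let t := tan (th0 / 2) in
  let V j := padd (pscal (psi j) (vnormal sigma n p th0 j))
                  (pscal (eta j) (vtangent sigma n p th0 j)) in
  V k = padd (pscal (t * psi k + eta k) (tangent k)) (pscal (psi k - t * eta k) (normal k))
  /\ V (next n k) =
     padd (pscal (- t * psi (next n k) + eta (next n k)) (tangent k))
          (pscal (psi (next n k) + t * eta (next n k)) (normal k)).
Proof.
intros Hk t V; unfold V, t, vtangent.
rewrite vertex_normal, next_vertex_normal by exact Hk.
unfold normal; rewrite !Jrot_eq by exact Hsigma.
destruct (tangent k) as [a b]; unfold padd, psub, pscal; simpl.
destruct Hsigma as [-> | ->]; split; f_equal; ring.
Qed.

(* The curve is a critical point of [Length + mu * (shoelace sum)] for the
   multiplier mu = - sigma * tan(th0/2) / l0, i.e. of L + kappa Vol. *)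
Lemma equiangular_critical j : (j < n)%nat ->
  vertex_gradient n p (- sigma * tan (th0 / 2) / l0) j = (0, 0).
Proof.
intros Hj; destruct (tan_half th0 Hth) as [Hc ->].
pose proof (sin2_cos2 th0) as Hsc; unfold Rsqr in Hsc.
assert (Hpj : (prev n j < n)%nat) by (apply prev_lt, Hn).
unfold vertex_gradient; rewrite !Hlen by assumption.
rewrite !edge_tangent, previous_tangent by exact Hj.
unfold normal; rewrite Jrot_eq by exact Hsigma.
destruct (tangent j) as [a b]; unfold padd, psub, pscal, perp; simpl.
destruct Hsigma as [-> | ->]; f_equal; field_simplify; try (split; lra);
  replace (sin th0 ^ 2) with (1 - cos th0 ^ 2) by (rewrite <- Hsc; ring); field; nra.
Qed.

Lemma edge_second_variation (psi eta : nat -> R) k : (k < n)%nat ->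
  let t := tan (th0 / 2) in
  let kappa := 2 * t / l0 in
  let V j := padd (pscal (psi j) (vnormal sigma n p th0 j))
                  (pscal (eta j) (vtangent sigma n p th0 j)) in
  len2 (edge n p k) (psub (V (next n k)) (V k)) (0, 0)
  + 2 * (- sigma * t / l0) * cross (V k) (V (next n k))
  = ((dgrad n l0 psi k) ^ 2 - kappa ^ 2 * psi k * psi (next n k)
     + t ^ 2 * (kappa * dgrad n l0 psi k * (eta (next n k) + eta k) + (dgrad n l0 eta k) ^ 2)) * l0
    + 2 * t * (1 - t ^ 2) / l0 * (psi (next n k) * eta (next n k) - psi k * eta k).
Proof.
intros Hk t kappa V.
pose proof (vertex_velocities psi eta k Hk) as HV; cbv zeta in HV; destruct HV as [HVk HVn].
unfold V; rewrite HVk, HVn, edge_tangent; unfold normal.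
rewrite edge_frame_second_variation by (exact Hsigma || exact Hl0 || apply tangent_unit, Hk).
unfold kappa, dgrad; rewrite Nat.mod_small by exact Hk.
apply second_variation_integrand; [exact Hsigma | lra].
Qed.

End Equiangular.

Lemma dgrad_zero n l0 f k : (0 < n)%nat -> (forall j, (j < n)%nat -> f j = 0) ->
  dgrad n l0 f k = 0.
Proof.
intros Hn Hf; unfold dgrad; rewrite !Hf; [unfold Rdiv; ring | apply Nat.mod_upper_bound; lia
  | apply next_lt, Hn].
Qed.

Lemma tangential_terms_vanish n l0 psi eta kappa T : (0 < n)%nat ->
  (forall k, (k < n)%nat -> eta k = 0) ->
  fsum n (fun k => ((dgrad n l0 psi k) ^ 2 - kappa ^ 2 * psi k * psi (next n k)
       + T ^ 2 * (kappa * dgrad n l0 psi k * (eta (next n k) + eta k) + (dgrad n l0 eta k) ^ 2)) * l0)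
  = fsum n (fun k => ((dgrad n l0 psi k) ^ 2 - kappa ^ 2 * psi k * psi (next n k)) * l0).
Proof.
intros Hn Heta; apply fsum_ext; intros k Hk.
rewrite (dgrad_zero n l0 eta k Hn Heta), (Heta k Hk), (Heta _ (next_lt n k Hn)); ring.
Qed.

Lemma summation_by_parts n l0 psi kappa : (0 < n)%nat -> l0 <> 0 ->
  fsum n (fun k => ((dgrad n l0 psi k) ^ 2 - kappa ^ 2 * psi k * psi (next n k)) * l0)
  = - fsum n (fun k => psi k * (dlap n l0 psi k + kappa ^ 2 * psi (next n k)) * l0).
Proof.
intros Hn Hl.
set (h := fun j => psi j * dgrad n l0 psi (prev n j)).
transitivity (fsum n (fun k => - (psi k * (dlap n l0 psi k + kappa ^ 2 * psi (next n k)) * l0)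
                                + (h (next n k) - h k))).
- apply fsum_ext; intros k Hk; unfold h, dlap, dgrad; rewrite prev_next by exact Hk.
  rewrite (Nat.mod_small k) by exact Hk; field; exact Hl.
- rewrite fsum_plus, fsum_opp, fsum_telescope by exact Hn; ring.
Qed.

Theorem mainTheorem15
  (sigma : R) (n : nat) (p : nat -> pt) (l0 th0 kappa : R)
  (P : R -> nat -> pt) (eps : R) (psi eta : nat -> R) :
  (sigma = 1 \/ sigma = -1) ->
  closed_curve n p ->
  (forall k, (k < n)%nat -> len n p k = l0) ->
  - PI < th0 < PI ->
  (forall k, (k < n)%nat -> is_signed_angle sigma n p k th0) ->
  kappa = 2 * tan (th0 / 2) / l0 ->
  0 < eps ->
  (forall t, - eps < t < eps -> closed_curve n (P t)) ->
  (forall k, (k < n)%nat ->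
     C2_on eps (fun t => fst (P t k)) /\ C2_on eps (fun t => snd (P t k))) ->
  (forall k, (k < n)%nat -> P 0 k = p k) ->
  (forall t, - eps < t < eps -> Vol sigma n (P t) = Vol sigma n (P 0)) ->
  (forall k, (k < n)%nat ->
     Derive (fun t => fst (P t k)) 0 =
       fst (padd (pscal (psi k) (vnormal sigma n p th0 k))
                 (pscal (eta k) (vtangent sigma n p th0 k))) /\
     Derive (fun t => snd (P t k)) 0 =
       snd (padd (pscal (psi k) (vnormal sigma n p th0 k))
                 (pscal (eta k) (vtangent sigma n p th0 k)))) ->
  Derive_n (fun t => Length n (P t)) 2 0 =
    fsum n (fun k =>
      ((dgrad n l0 psi k) ^ 2 - kappa ^ 2 * psi k * psi (next n k)
       + (tan (th0 / 2)) ^ 2 *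
           (kappa * dgrad n l0 psi k * (eta (next n k) + eta k)
            + (dgrad n l0 eta k) ^ 2)) * l0)
  /\
  ((forall k, (k < n)%nat -> eta k = 0) ->
     Derive_n (fun t => Length n (P t)) 2 0 =
       fsum n (fun k =>
         ((dgrad n l0 psi k) ^ 2 - kappa ^ 2 * psi k * psi (next n k)) * l0)
     /\
     Derive_n (fun t => Length n (P t)) 2 0 =
       - fsum n (fun k =>
           psi k * (dlap n l0 psi k + kappa ^ 2 * psi (next n k)) * l0)).
Proof.
intros Hs Hp Hlen Hth Hangle -> Heps Hfam HC2 HP0 HVol Hvel0.
assert (Hn : (0 < n)%nat) by (destruct Hp; lia).
assert (Hl0 : 0 < l0) by (rewrite <- (Hlen 0%nat Hn); apply len_pos; assumption).
set (V := fun j => padd (pscal (psi j) (vnormal sigma n p th0 j))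
                        (pscal (eta j) (vtangent sigma n p th0 j))).
assert (HV : forall j, (j < n)%nat -> vel P 0 j = V j)
  by (intros j Hj; unfold vel; rewrite (proj1 (Hvel0 j Hj)), (proj2 (Hvel0 j Hj));
      symmetry; apply surjective_pairing).
match goal with |- ?A /\ _ => assert (Main : A) end.
{ (* p is critical for L + kappa Vol; each edge then contributes the integrand
     up to a telescoping term. *)
  rewrite (second_variation_at_critical n P eps Hn Heps Hfam HC2 sigma
             (- sigma * tan (th0 / 2) / l0) Hs HVol).
  2: { intros j Hj; rewrite (vertex_gradient_ext n (P 0) p) by assumption.
       apply equiangular_critical; assumption. }
  match goal with |- _ = fsum n ?F =>
    rewrite (fsum_ext n _ (fun k => F k + 2 * tan (th0 / 2) * (1 - tan (th0 / 2) ^ 2) / l0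
                                          * (psi (next n k) * eta (next n k) - psi k * eta k))) end.
  - rewrite fsum_plus, fsum_scal, (fsum_telescope n (fun j => psi j * eta j)) by exact Hn; ring.
  - intros k Hk; pose proof (next_lt n k Hn) as Hnk.
    rewrite (edge_ext n (P 0) p), (edge_lt n (vel P 0)), !HV by assumption.
    apply edge_second_variation; assumption. }
split; [exact Main|].
intros Heta; rewrite Main, tangential_terms_vanish by assumption.
split; [reflexivity | apply summation_by_parts; [exact Hn | lra]].
Qed.
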